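(* (a) $[0,1]^\mathbb{N}/c_0\equiv_B\mathbb{T}^\mathbb{N}/G_0$. (b) For every $1\le p<\infty$, $[0,1]^\mathbb{N}/\ell^p\equiv_B\mathbb{T}^\mathbb{N}/G_p$.
   Context: $\mathbb{T}=\{z\in\mathbb{C}:|z|=1\}$; $c_0$ is the space of real sequences converging to $0$; $\ell^p$ the real sequences with $\sum|\alpha_n|^p<\infty$. $G_0=\{(e^{i\alpha_n})_n:(\alpha_n)\in c_0\}$ and $G_p=\{(e^{i\alpha_n})_n:(\alpha_n)\in\ell^p\}$. $[0,1]^\mathbb{N}/c_0$ is the equivalence relation on $[0,1]^\mathbb{N}$ (product topology) given by $\alpha\sim\beta\iff\alpha-\beta\in c_0$; similarly $[0,1]^\mathbb{N}/\ell^p$ with $\ell^p$. $\mathbb{T}^\mathbb{N}/G$ is the equivalence relation on $\mathbb{T}^\mathbb{N}$ given by $z\sim w\iff zw^{-1}\in G$ (coordinatewise operations). For equivalence relations $E,F$ on Polish spaces $X,Y$, $E\le_B F$ means there is a Borel map $f:X\to Y$ with $xEy\iff f(x)Ff(y)$ for all $x,y$; $E\equiv_B F$ means $E\le_B F$ and $F\le_B E$. *)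

From Stdlib Require Import Reals Lra.
Open Scope R_scope.

(** * Polish-space setup
   Spaces of sequences nat -> A, where A is R or R*R (= C), with the product
   topology; subspaces [0,1]^N and T^N are given as predicates. *)

Definition distR (a b : R) : R := Rabs (a - b).
Definition distC (a b : R * R) : R :=
  Rmax (Rabs (fst a - fst b)) (Rabs (snd a - snd b)).

(** Open sets of the product topology on nat -> A (A metric with distance d):
    basic neighbourhoods constrain finitely many coordinates. *)
Definition prod_open {A : Type} (d : A -> A -> R) (U : (nat -> A) -> Prop) : Prop :=
  forall x, U x -> exists (N : nat) (eps : R), 0 < eps /\
    forall y, (forall i, (i < N)%nat -> d (x i) (y i) < eps) -> U y.

Inductive borel {A : Type} (d : A -> A -> R) : ((nat -> A) -> Prop) -> Prop :=
| borel_open : forall U, prod_open d U -> borel d U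
| borel_compl : forall B, borel d B -> borel d (fun x => ~ B x)
| borel_union : forall Bs : nat -> (nat -> A) -> Prop,
    (forall k, borel d (Bs k)) -> borel d (fun x => exists k, Bs k x).

(** f maps the subspace X into Y and is Borel for the subspace Borel structures
    (Borel sets of a subspace = traces of ambient Borel sets). *)
Definition borel_map {A B : Type} (dA : A -> A -> R) (dB : B -> B -> R)
  (X : (nat -> A) -> Prop) (Y : (nat -> B) -> Prop)
  (f : (nat -> A) -> (nat -> B)) : Prop :=
  (forall x, X x -> Y (f x)) /\
  forall S, borel dB S -> exists C, borel dA C /\ forall x, X x -> (S (f x) <-> C x).

Definition borel_reducible {A B : Type} (dA : A -> A -> R) (dB : B -> B -> R)
  (X : (nat -> A) -> Prop) (E : (nat -> A) -> (nat -> A) -> Prop)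
  (Y : (nat -> B) -> Prop) (F : (nat -> B) -> (nat -> B) -> Prop) : Prop :=
  exists f, borel_map dA dB X Y f /\
    forall x y, X x -> X y -> (E x y <-> F (f x) (f y)).

Definition borel_bireducible {A B : Type} (dA : A -> A -> R) (dB : B -> B -> R)
  (X : (nat -> A) -> Prop) (E : (nat -> A) -> (nat -> A) -> Prop)
  (Y : (nat -> B) -> Prop) (F : (nat -> B) -> (nat -> B) -> Prop) : Prop :=
  borel_reducible dA dB X E Y F /\ borel_reducible dB dA Y F X E.

Definition cube (a : nat -> R) : Prop := forall n, 0 <= a n <= 1.
Definition torusN (z : nat -> R * R) : Prop :=
  forall n, fst (z n) ^ 2 + snd (z n) ^ 2 = 1.

Definition cmul (z w : R * R) : R * R :=
  (fst z * fst w - snd z * snd w, fst z * snd w + snd z * fst w).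
Definition cinv (w : R * R) : R * R :=
  let n := fst w ^ 2 + snd w ^ 2 in (fst w / n, - snd w / n).
Definition cexpi (t : R) : R * R := (cos t, sin t).

Definition c0 (a : nat -> R) : Prop := Un_cv a 0.
(** |x|^p with the convention 0^p = 0 (Rpower needs a positive base). *)
Definition rpow (x p : R) : R := if Req_EM_T x 0 then 0 else Rpower x p.
Definition lp (p : R) (a : nat -> R) : Prop :=
  exists l, infinite_sum (fun n => rpow (Rabs (a n)) p) l.

Definition cube_rel (S : (nat -> R) -> Prop) (a b : nat -> R) : Prop :=
  S (fun n => a n - b n).

Definition Gof (S : (nat -> R) -> Prop) (z : nat -> R * R) : Prop :=
  exists alpha, S alpha /\ forall n, z n = cexpi (alpha n).

Definition torus_rel (G : (nat -> R * R) -> Prop) (z w : nat -> R * R) : Prop :=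
  G (fun n => cmul (z n) (cinv (w n))).

(* Both reductions are coordinatewise.  On [[0,1]^N], [x |-> (e^{i x_n})_n] works because for
   [|t| <= 1] the chord [|e^{it} - 1|] is comparable to [|t|], so [x - y] and the angles of
   [e^{ix}/e^{iy}] lie in the same ideal.  Conversely, a point of [T^N] is sent to the interleaving
   of its affinely rescaled real and imaginary parts; as [|z - w| = |z w^{-1} - 1|] on the circle,
   [z w^{-1}] has angles in the ideal iff [z - w] does.  Both maps are continuous, hence Borel, and
   the only properties of [c0] and [lp p] used are that they are solid (closed under domination by
   [C (|b| + |c|)]) and stable under interleaving and de-interleaving. *)

From Stdlib Require Import Reals Lra Lia Psatz.
Open Scope R_scope.

Lemma Rabs_sin_le x : Rabs (sin x) <= Rabs x.
Proof.
  pose proof PI2_1. pose proof (SIN_bound x).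
  destruct (Rtotal_order x 0) as [Hx|[->|Hx]].
  - pose proof (sin_gt_x x Hx). rewrite (Rabs_left x Hx).
    destruct (Rle_lt_dec (sin x) 0).
    + rewrite Rabs_left1; lra.
    + pose proof (sin_ge_0 (- x)) as Hneg. rewrite sin_neg in Hneg.
      rewrite Rabs_pos_eq; lra.
  - rewrite sin_0; lra.
  - pose proof (sin_lt_x x Hx). rewrite (Rabs_pos_eq x) by lra.
    destruct (Rle_lt_dec 0 (sin x)).
    + rewrite Rabs_pos_eq; lra.
    + pose proof (sin_ge_0 x). rewrite Rabs_left; lra.
Qed.

Lemma Rabs_half t : Rabs (t / 2) = Rabs t / 2.
Proof. unfold Rdiv. rewrite Rabs_mult, Rabs_inv, (Rabs_pos_eq 2) by lra. reflexivity. Qed.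

Lemma Rabs_one_sub_cos_le x : Rabs (1 - cos x) <= Rabs x.
Proof.
  replace x with (2 * (x / 2)) at 1 by field.
  rewrite cos_2a_sin.
  replace (1 - (1 - 2 * sin (x / 2) * sin (x / 2))) with (2 * (sin (x / 2) * sin (x / 2)))
    by ring.
  pose proof (Rabs_sin_le (x / 2)).
  assert (Rabs (sin (x / 2)) <= 1) by (apply Rabs_le, SIN_bound).
  pose proof (Rabs_half x).
  rewrite !Rabs_mult, (Rabs_pos_eq 2) by lra.
  pose proof (Rabs_pos (sin (x / 2))). nra.
Qed.

(* From the alternating Taylor lower bound [sin_lb] of [SIN]. *)
Lemma sin_ge_half t : 0 <= t <= 1 -> t / 2 <= sin t.
Proof.
  intros Ht. pose proof PI2_1.
  destruct (SIN t) as [Hlb _]; try lra.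
  eapply Rle_trans; [|exact Hlb].
  unfold sin_lb, sin_approx, sin_term. rewrite !tech5. simpl sum_f_R0.
  replace (INR (Factorial.fact (2 * 3 + 1))) with 5040 by (rewrite INR_IZR_INZ; reflexivity).
  simpl Factorial.fact.
  replace (INR 1) with 1 by (rewrite INR_IZR_INZ; reflexivity).
  replace (INR 6) with 6 by (rewrite INR_IZR_INZ; reflexivity).
  replace (INR 120) with 120 by (rewrite INR_IZR_INZ; reflexivity).
  simpl pow.
  assert (t * t <= 1) by nra.
  assert (0 <= t * (t * (t * 1)) <= t) by (split; nra).
  assert (0 <= t * (t * (t * (t * (t * 1)))) <= t * (t * (t * 1))) by (split; nra).
  assert (0 <= t * (t * (t * (t * (t * (t * (t * 1)))))) <= t * (t * (t * (t * (t * 1)))))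
    by (split; nra).
  lra.
Qed.

Lemma cos_1_le : cos 1 <= 7 / 8.
Proof.
  replace 1 with (2 * (1 / 2)) by field. rewrite cos_2a_sin.
  pose proof (sin_ge_half (1 / 2) ltac:(lra)). nra.
Qed.

Lemma cexpi_dist_one_le t : distC (cexpi t) (1, 0) <= Rabs t.
Proof.
  unfold distC, cexpi; simpl. apply Rmax_lub.
  - rewrite Rabs_minus_sym. apply Rabs_one_sub_cos_le.
  - rewrite Rminus_0_r. apply Rabs_sin_le.
Qed.

(* Below [t = 1] the sine is at least [t/2]; on [[1, PI]] the cosine stays below [7/8]. *)
Lemma cexpi_dist_one_ge_pos t : 0 <= t <= PI -> t <= 32 * distC (cexpi t) (1, 0).
Proof.
  intros Ht. pose proof PI2_1. pose proof PI_4.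
  unfold distC, cexpi; simpl.
  pose proof (Rmax_l (Rabs (cos t - 1)) (Rabs (sin t - 0))).
  pose proof (Rmax_r (Rabs (cos t - 1)) (Rabs (sin t - 0))).
  destruct (Rle_lt_dec t 1).
  - pose proof (sin_ge_half t ltac:(lra)).
    pose proof (Rle_abs (sin t - 0)). lra.
  - pose proof (cos_decreasing_1 1 t ltac:(lra) ltac:(lra) ltac:(lra) ltac:(lra) ltac:(lra)).
    pose proof cos_1_le.
    pose proof (Rle_abs (- (cos t - 1))) as Habs. rewrite Rabs_Ropp in Habs. lra.
Qed.

Lemma cexpi_dist_one_ge t : -PI <= t <= PI -> Rabs t <= 32 * distC (cexpi t) (1, 0).
Proof.
  intros Ht. destruct (Rle_dec 0 t).
  - rewrite Rabs_pos_eq by lra. apply cexpi_dist_one_ge_pos; lra.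
  - rewrite Rabs_left by lra.
    replace (distC (cexpi t) (1, 0)) with (distC (cexpi (- t)) (1, 0)).
    + apply cexpi_dist_one_ge_pos; lra.
    + unfold distC, cexpi; simpl. rewrite cos_neg, sin_neg, !Rminus_0_r, Rabs_Ropp. reflexivity.
Qed.

Lemma Rabs_convex_comb_le x y z w :
  Rabs x <= 1 -> Rabs z <= 1 -> Rabs (x * y + z * w) <= Rabs y + Rabs w.
Proof.
  intros. eapply Rle_trans; [apply Rabs_triang|]. rewrite !Rabs_mult.
  pose proof (Rabs_pos y). pose proof (Rabs_pos w). nra.
Qed.

Lemma cexpi_lipschitz a b : distC (cexpi a) (cexpi b) <= 2 * Rabs (a - b).
Proof.
  pose proof (cexpi_dist_one_le (a - b)) as Hd. unfold distC, cexpi in *; simpl in *.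
  pose proof (Rmax_l (Rabs (cos (a - b) - 1)) (Rabs (sin (a - b) - 0))).
  pose proof (Rmax_r (Rabs (cos (a - b) - 1)) (Rabs (sin (a - b) - 0))).
  replace a with (b + (a - b)) by ring. rewrite cos_plus, sin_plus.
  replace (b + (a - b) - b) with (a - b) by ring.
  set (d := a - b) in *. rewrite Rminus_0_r in *.
  assert (Rabs (cos b) <= 1) by (apply Rabs_le, COS_bound).
  assert (Rabs (sin b) <= 1) by (apply Rabs_le, SIN_bound).
  assert (Rabs (- sin b) <= 1) by (rewrite Rabs_Ropp; auto).
  apply Rmax_lub.
  - replace (cos b * cos d - sin b * sin d - cos b)
      with (cos b * (cos d - 1) + - sin b * sin d) by ring.
    eapply Rle_trans; [apply Rabs_convex_comb_le; auto|]. lra.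
  - replace (sin b * cos d + cos b * sin d - sin b)
      with (sin b * (cos d - 1) + cos b * sin d) by ring.
    eapply Rle_trans; [apply Rabs_convex_comb_le; auto|]. lra.
Qed.

Definition unit_circle (z : R * R) : Prop := fst z ^ 2 + snd z ^ 2 = 1.

Lemma unit_circle_cexpi t : unit_circle (cexpi t).
Proof. unfold unit_circle, cexpi; simpl. pose proof (sin2_cos2 t). unfold Rsqr in *. lra. Qed.

Lemma unit_circle_bound z : unit_circle z -> Rabs (fst z) <= 1 /\ Rabs (snd z) <= 1.
Proof. unfold unit_circle. intros. split; apply Rabs_le; nra. Qed.

Lemma cinv_unit w : unit_circle w -> cinv w = (fst w, - snd w).
Proof. unfold unit_circle, cinv. intros Hw. cbv zeta. rewrite Hw. f_equal; field. Qed.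

Lemma unit_circle_quot z w : unit_circle z -> unit_circle w -> unit_circle (cmul z (cinv w)).
Proof.
  intros Hz Hw. rewrite cinv_unit by exact Hw.
  destruct z as [z1 z2], w as [w1 w2]. unfold unit_circle, cmul in *; cbn [fst snd] in *.
  transitivity ((z1 ^ 2 + z2 ^ 2) * (w1 ^ 2 + w2 ^ 2)); [ring|].
  rewrite Hz, Hw. ring.
Qed.

Lemma cexpi_quot a b : cmul (cexpi a) (cinv (cexpi b)) = cexpi (a - b).
Proof.
  rewrite cinv_unit by apply unit_circle_cexpi. unfold cmul, cexpi; simpl.
  rewrite cos_minus, sin_minus. f_equal; ring.
Qed.

(* On the circle, [z - w = (z w^{-1} - 1) w] and [z w^{-1} - 1 = (z - w) w^{-1}]. *)
Lemma dist_le_quot_dist_one z w : unit_circle z -> unit_circle w ->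
  distC z w <= 2 * distC (cmul z (cinv w)) (1, 0).
Proof.
  intros Hz Hw. destruct (unit_circle_bound w Hw) as [Hw1 Hw2].
  rewrite cinv_unit by exact Hw.
  destruct z as [z1 z2], w as [w1 w2]. unfold unit_circle, distC, cmul in *; cbn [fst snd] in *.
  set (u1 := z1 * w1 - z2 * - w2). set (u2 := z1 * - w2 + z2 * w1).
  pose proof (Rmax_l (Rabs (u1 - 1)) (Rabs (u2 - 0))).
  pose proof (Rmax_r (Rabs (u1 - 1)) (Rabs (u2 - 0))).
  assert (Rabs (- w2) <= 1) by (rewrite Rabs_Ropp; exact Hw2).
  apply Rmax_lub.
  - replace (z1 - w1) with (w1 * (u1 - 1) + - w2 * (u2 - 0))
      by (transitivity (z1 * (w1 ^ 2 + w2 ^ 2) - w1); [unfold u1, u2; ring | rewrite Hw; ring]).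
    eapply Rle_trans; [apply Rabs_convex_comb_le; auto|]. lra.
  - replace (z2 - w2) with (w2 * (u1 - 1) + w1 * (u2 - 0))
      by (transitivity (z2 * (w1 ^ 2 + w2 ^ 2) - w2); [unfold u1, u2; ring | rewrite Hw; ring]).
    eapply Rle_trans; [apply Rabs_convex_comb_le; auto|]. lra.
Qed.

Lemma quot_dist_one_le_sum z w : unit_circle w ->
  distC (cmul z (cinv w)) (1, 0) <= Rabs (fst z - fst w) + Rabs (snd z - snd w).
Proof.
  intros Hw. destruct (unit_circle_bound w Hw) as [Hw1 Hw2].
  rewrite cinv_unit by exact Hw.
  destruct z as [z1 z2], w as [w1 w2]. unfold unit_circle, distC, cmul in *; cbn [fst snd] in *.
  assert (Rabs (- w2) <= 1) by (rewrite Rabs_Ropp; exact Hw2).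
  apply Rmax_lub.
  - replace (z1 * w1 - z2 * - w2 - 1) with (w1 * (z1 - w1) + w2 * (z2 - w2))
      by (rewrite <- Hw at 1; ring).
    apply Rabs_convex_comb_le; auto.
  - replace (z1 * - w2 + z2 * w1 - 0) with (- w2 * (z1 - w1) + w1 * (z2 - w2)) by ring.
    apply Rabs_convex_comb_le; auto.
Qed.

Definition arg (u : R * R) : R :=
  if Rle_dec 0 (snd u) then acos (fst u) else - acos (fst u).

Lemma arg_spec u : unit_circle u -> cexpi (arg u) = u /\ -PI <= arg u <= PI.
Proof.
  destruct u as [c s]. unfold unit_circle; simpl. intros Hu.
  assert (Hc : -1 <= c <= 1) by nra.
  pose proof (acos_bound c).
  assert (Hs : sqrt (1 - c²) = Rabs s).
  { replace (1 - c²) with (s²) by (unfold Rsqr; nra). apply sqrt_Rsqr_abs. }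
  unfold arg, cexpi; simpl. destruct (Rle_dec 0 s).
  - rewrite cos_acos, sin_acos, Hs, Rabs_pos_eq by auto. split; [reflexivity|lra].
  - rewrite cos_neg, sin_neg, cos_acos, sin_acos, Hs, Rabs_left by lra.
    split; [f_equal; ring|lra].
Qed.

(** * Ideals of sequences stable under interleaving *)

Definition interleave (a b : nat -> R) (i : nat) : R :=
  if Nat.even i then a (Nat.div2 i) else b (Nat.div2 i).

Lemma interleave_even a b n : interleave a b (2 * n) = a n.
Proof. unfold interleave. rewrite Nat.even_mul, Nat.div2_double. reflexivity. Qed.

Lemma interleave_odd a b n : interleave a b (2 * n + 1) = b n.
Proof.
  unfold interleave. replace (2 * n + 1)%nat with (S (2 * n)) by lia.
  rewrite Nat.even_succ, Nat.div2_succ_double, <- Nat.negb_even, Nat.even_mul. reflexivity.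
Qed.

Lemma even_or_odd_div2 i : (i = 2 * Nat.div2 i \/ i = 2 * Nat.div2 i + 1)%nat.
Proof. pose proof (Nat.div2_odd i). destruct (Nat.odd i); simpl in *; lia. Qed.

Lemma interleave_dominated a b g h C : 0 <= C ->
  (forall n, Rabs (a n) <= C * Rabs (g n)) -> (forall n, Rabs (b n) <= C * Rabs (h n)) ->
  forall i, Rabs (interleave a b i) <= C * (Rabs (interleave g h i) + Rabs (interleave g h i)).
Proof.
  intros HC Ha Hb i. pose proof (Rabs_pos (interleave g h i)).
  enough (Rabs (interleave a b i) <= C * Rabs (interleave g h i)) by nra.
  destruct (even_or_odd_div2 i) as [E|E]; rewrite E;
    [rewrite !interleave_even|rewrite !interleave_odd]; auto.
Qed.

Record interleaving_ideal (S : (nat -> R) -> Prop) : Prop := {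
  ideal_dominated : forall a b c C, S b -> S c ->
    (forall n, Rabs (a n) <= C * (Rabs (b n) + Rabs (c n))) -> S a;
  ideal_deinterleave : forall a b, S (interleave a b) -> S a /\ S b;
  ideal_interleave : forall a b, S a -> S b -> S (interleave a b) }.

Lemma ideal_ext S a b : interleaving_ideal S -> (forall n, a n = b n) -> S b -> S a.
Proof.
  intros HS Hab Hb. apply (ideal_dominated S HS a b b 1 Hb Hb). intros n.
  rewrite Hab. pose proof (Rabs_pos (b n)). lra.
Qed.

Lemma Un_cv_0_dominated a d : (forall n, Rabs (a n) <= d n) -> Un_cv d 0 -> Un_cv a 0.
Proof.
  intros Had Hd eps Heps. destruct (Hd eps Heps) as [N HN]. exists N. intros n Hn.
  specialize (HN n Hn). specialize (Had n). unfold R_dist in *.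
  rewrite Rminus_0_r in *. pose proof (Rle_abs (d n)). lra.
Qed.

Lemma Un_cv_const c : Un_cv (fun _ => c) c.
Proof.
  intros eps Heps. exists 0%nat. intros. unfold R_dist. rewrite Rminus_diag, Rabs_R0. exact Heps.
Qed.

Lemma interleaving_ideal_c0 : interleaving_ideal c0.
Proof.
  unfold c0. split.
  - intros a b c C Hb Hc Hdom. apply (Un_cv_0_dominated a _ Hdom).
    replace 0 with (C * (Rabs 0 + Rabs 0)) by (rewrite Rabs_R0; ring).
    apply CV_mult; [apply Un_cv_const|].
    apply CV_plus; apply cv_cvabs; assumption.
  - intros a b Hab. split; intros eps Heps; destruct (Hab eps Heps) as [N HN];
      exists N; intros n Hn.
    + rewrite <- (interleave_even a b). apply HN. lia.
    + rewrite <- (interleave_odd a b). apply HN. lia.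
  - intros a b Ha Hb eps Heps.
    destruct (Ha eps Heps) as [N1 HN1], (Hb eps Heps) as [N2 HN2].
    exists (2 * max N1 N2)%nat. intros i Hi.
    destruct (even_or_odd_div2 i) as [E|E]; rewrite E.
    + rewrite interleave_even. apply HN1. lia.
    + rewrite interleave_odd. apply HN2. lia.
Qed.

Lemma rpow_nonneg x p : 0 <= rpow x p.
Proof. unfold rpow. destruct (Req_EM_T x 0); [lra|]. left. apply exp_pos. Qed.

Lemma rpow_le x y p : 0 <= p -> 0 <= x <= y -> rpow x p <= rpow y p.
Proof.
  intros Hp Hxy. unfold rpow.
  destruct (Req_EM_T x 0), (Req_EM_T y 0); try lra.
  - left. apply exp_pos.
  - apply Rle_Rpower_l; lra.
Qed.

Lemma rpow_mul x y p : 0 <= x -> 0 <= y -> rpow (x * y) p = rpow x p * rpow y p.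
Proof.
  intros Hx Hy. unfold rpow.
  destruct (Req_EM_T x 0) as [->|]; [rewrite Rmult_0_l; destruct (Req_EM_T 0 0); lra|].
  destruct (Req_EM_T y 0) as [->|]; [rewrite Rmult_0_r; destruct (Req_EM_T 0 0); lra|].
  destruct (Req_EM_T (x * y) 0) as [Hxy|].
  - apply Rmult_integral in Hxy. tauto.
  - rewrite Rpower_mult_distr; lra.
Qed.

Lemma rpow_add_le x y p : 0 <= p -> 0 <= x -> 0 <= y ->
  rpow (x + y) p <= rpow 2 p * (rpow x p + rpow y p).
Proof.
  intros Hp Hx Hy. pose proof (rpow_nonneg 2 p).
  pose proof (rpow_nonneg x p). pose proof (rpow_nonneg y p).
  destruct (Rle_dec x y).
  - eapply Rle_trans; [apply (rpow_le _ (2 * y)); lra|]. rewrite rpow_mul by lra. nra.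
  - eapply Rle_trans; [apply (rpow_le _ (2 * x)); lra|]. rewrite rpow_mul by lra. nra.
Qed.

Definition psum (p : R) (a : nat -> R) (n : nat) : R :=
  sum_f_R0 (fun k => rpow (Rabs (a k)) p) n.

Lemma psum_nonneg p a n : 0 <= psum p a n.
Proof. apply cond_pos_sum. intros. apply rpow_nonneg. Qed.

Lemma psum_le_psum p a n m : (n <= m)%nat -> psum p a n <= psum p a m.
Proof.
  induction 1; [lra|]. unfold psum in *. simpl.
  pose proof (rpow_nonneg (Rabs (a (S m))) p). lra.
Qed.

Lemma lp_iff_bounded_psum p a : lp p a <-> exists M, forall n, psum p a n <= M.
Proof.
  split.
  - intros [l Hl]. exists l. intros n. apply Rnot_lt_le. intros Hlt.
    destruct (Hl (psum p a n - l)) as [N HN]; [lra|].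
    specialize (HN (max n N) ltac:(lia)).
    pose proof (psum_le_psum p a n (max n N) ltac:(lia)).
    unfold R_dist in HN. fold (psum p a (max n N)) in HN.
    pose proof (Rle_abs (psum p a (max n N) - l)). lra.
  - intros [M HM]. destruct (growing_cv (psum p a)) as [l Hl].
    + intros n. apply psum_le_psum. lia.
    + exists M. intros x [i ->]. apply HM.
    + exists l. exact Hl.
Qed.

Lemma psum_interleave p a b n :
  psum p (interleave a b) (2 * n + 1) = psum p a n + psum p b n.
Proof.
  induction n as [|n IHn].
  - unfold psum, interleave. simpl. ring.
  - unfold psum in *.
    replace (2 * S n + 1)%nat with (S (S (2 * n + 1))) by lia.
    cbn [sum_f_R0]. rewrite IHn.
    replace (S (2 * n + 1)) with (2 * S n)%nat by lia. rewrite interleave_even.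
    replace (S (2 * S n)) with (2 * S n + 1)%nat by lia. rewrite interleave_odd. ring.
Qed.

Lemma psum_dominated p a b c C : 0 <= p ->
  (forall n, Rabs (a n) <= C * (Rabs (b n) + Rabs (c n))) ->
  forall n, psum p a n <= rpow (Rmax C 0) p * rpow 2 p * (psum p b n + psum p c n).
Proof.
  intros Hp Hdom n. unfold psum.
  rewrite Rmult_plus_distr_l, !scal_sum, <- plus_sum. apply sum_Rle. intros k _.
  pose proof (Rabs_pos (b k)). pose proof (Rabs_pos (c k)).
  pose proof (Rmax_l C 0). pose proof (Rmax_r C 0). pose proof (rpow_nonneg (Rmax C 0) p).
  eapply Rle_trans.
  { apply (rpow_le _ (Rmax C 0 * (Rabs (b k) + Rabs (c k))) p Hp).
    split; [apply Rabs_pos|]. eapply Rle_trans; [apply Hdom|]. nra. }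
  rewrite rpow_mul by lra.
  pose proof (rpow_add_le (Rabs (b k)) (Rabs (c k)) p Hp ltac:(lra) ltac:(lra)). nra.
Qed.

Lemma interleaving_ideal_lp p : 0 <= p -> interleaving_ideal (lp p).
Proof.
  intros Hp. split.
  - intros a b c C Hb Hc Hdom. rewrite lp_iff_bounded_psum in *.
    destruct Hb as [Mb HMb], Hc as [Mc HMc].
    exists (rpow (Rmax C 0) p * rpow 2 p * (Mb + Mc)). intros n.
    eapply Rle_trans; [apply (psum_dominated p a b c C Hp Hdom)|].
    pose proof (rpow_nonneg (Rmax C 0) p). pose proof (rpow_nonneg 2 p).
    apply Rmult_le_compat_l; [nra|]. specialize (HMb n). specialize (HMc n). lra.
  - intros a b. rewrite !lp_iff_bounded_psum. intros [M HM].
    assert (Hab : forall n, psum p a n + psum p b n <= M).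
    { intros n. rewrite <- psum_interleave. apply HM. }
    split; exists M; intros n; specialize (Hab n);
      pose proof (psum_nonneg p a n); pose proof (psum_nonneg p b n); lra.
  - intros a b. rewrite !lp_iff_bounded_psum. intros [Ma HMa] [Mb HMb].
    exists (Ma + Mb). intros n.
    eapply Rle_trans; [apply (psum_le_psum p _ n (2 * n + 1)); lia|].
    rewrite psum_interleave. specialize (HMa n). specialize (HMb n). lra.
Qed.

Definition prod_continuous {A B : Type} (dA : A -> A -> R) (dB : B -> B -> R)
  (f : (nat -> A) -> (nat -> B)) : Prop :=
  forall U, prod_open dB U -> prod_open dA (fun x => U (f x)).

Lemma prod_continuous_coordinatewise {A B : Type} (dA : A -> A -> R) (dB : B -> B -> R)
  (f : (nat -> A) -> (nat -> B)) (g : nat -> nat) (L : R) :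
  0 < L -> (forall i, (g i <= i)%nat) ->
  (forall x y i, dB (f x i) (f y i) <= L * dA (x (g i)) (y (g i))) ->
  prod_continuous dA dB f.
Proof.
  intros HL Hg Hf U HU x Hx. destruct (HU _ Hx) as [N [eps [Heps HN]]].
  exists N, (eps / L). split; [apply Rdiv_lt_0_compat; lra|].
  intros y Hy. apply HN. intros i Hi.
  eapply Rle_lt_trans; [apply Hf|].
  specialize (Hy (g i) ltac:(specialize (Hg i); lia)).
  apply (Rmult_lt_compat_l L) in Hy; [|lra].
  replace (L * (eps / L)) with eps in Hy by (field; lra). exact Hy.
Qed.

Lemma borel_preimage {A B : Type} (dA : A -> A -> R) (dB : B -> B -> R)
  (f : (nat -> A) -> (nat -> B)) :
  prod_continuous dA dB f -> forall S, borel dB S -> borel dA (fun x => S (f x)).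
Proof.
  intros Hf S HS. induction HS as [U HU|T _ IH|Ts _ IH].
  - apply borel_open, Hf, HU.
  - apply borel_compl, IH.
  - apply (borel_union dA (fun k x => Ts k (f x))), IH.
Qed.

Lemma borel_map_of_continuous {A B : Type} (dA : A -> A -> R) (dB : B -> B -> R)
  (X : (nat -> A) -> Prop) (Y : (nat -> B) -> Prop) (f : (nat -> A) -> (nat -> B)) :
  (forall x, X x -> Y (f x)) -> prod_continuous dA dB f -> borel_map dA dB X Y f.
Proof.
  intros HXY Hf. split; [exact HXY|]. intros S HS.
  exists (fun x => S (f x)). split; [apply (borel_preimage dA dB f Hf S HS)|tauto].
Qed.

Definition cube_to_torus (x : nat -> R) : nat -> R * R := fun n => cexpi (x n).

Lemma cube_to_torus_borel : borel_map distR distC cube torusN cube_to_torus.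
Proof.
  apply borel_map_of_continuous.
  - intros x _ n. apply unit_circle_cexpi.
  - apply (prod_continuous_coordinatewise _ _ _ (fun i => i) 2); [lra|auto|].
    intros x y i. apply cexpi_lipschitz.
Qed.

Definition half_shift (t : R) : R := (t + 1) / 2.

Definition torus_to_cube (z : nat -> R * R) : nat -> R :=
  interleave (fun n => half_shift (fst (z n))) (fun n => half_shift (snd (z n))).

Definition half_diff_fst (z w : nat -> R * R) (n : nat) : R := (fst (z n) - fst (w n)) / 2.
Definition half_diff_snd (z w : nat -> R * R) (n : nat) : R := (snd (z n) - snd (w n)) / 2.

Lemma torus_to_cube_sub z w i :
  torus_to_cube z i - torus_to_cube w i = interleave (half_diff_fst z w) (half_diff_snd z w) i.
Proof.
  unfold torus_to_cube, half_shift, half_diff_fst, half_diff_snd.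
  destruct (even_or_odd_div2 i) as [E|E]; rewrite E;
    [rewrite !interleave_even|rewrite !interleave_odd]; field.
Qed.

Lemma half_diff_le_dist z w n :
  Rabs (half_diff_fst z w n) <= distC (z n) (w n) / 2 /\
  Rabs (half_diff_snd z w n) <= distC (z n) (w n) / 2.
Proof.
  unfold half_diff_fst, half_diff_snd, distC. rewrite !Rabs_half.
  pose proof (Rmax_l (Rabs (fst (z n) - fst (w n))) (Rabs (snd (z n) - snd (w n)))).
  pose proof (Rmax_r (Rabs (fst (z n) - fst (w n))) (Rabs (snd (z n) - snd (w n)))).
  lra.
Qed.

Lemma torus_to_cube_borel : borel_map distC distR torusN cube torus_to_cube.
Proof.
  apply borel_map_of_continuous.
  - intros z Hz i. unfold torus_to_cube, half_shift. specialize (Hz (Nat.div2 i)).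
    destruct (even_or_odd_div2 i) as [E|E]; rewrite E;
      [rewrite interleave_even|rewrite interleave_odd]; split; nra.
  - apply (prod_continuous_coordinatewise _ _ _ Nat.div2 (1 / 2));
      [lra|intros; apply Nat.div2_decr; lia|].
    intros z w i. unfold distR. rewrite torus_to_cube_sub.
    destruct (half_diff_le_dist z w (Nat.div2 i)).
    destruct (even_or_odd_div2 i) as [E|E]; rewrite E at 1;
      [rewrite interleave_even|rewrite interleave_odd]; lra.
Qed.

Section Reductions.

Variable S : (nat -> R) -> Prop.
Hypothesis HS : interleaving_ideal S.

Lemma cube_to_torus_reduction :
  borel_reducible distR distC cube (cube_rel S) torusN (torus_rel (Gof S)).
Proof.
  exists cube_to_torus. split; [exact cube_to_torus_borel|].
  intros x y Hx Hy. unfold cube_rel, torus_rel, Gof, cube_to_torus. split.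
  - intros Hxy. exists (fun n => x n - y n). split; [exact Hxy|]. intros n. apply cexpi_quot.
  - intros [g [Hg Hxy]]. apply (ideal_dominated S HS _ g g 16 Hg Hg). intros n.
    specialize (Hxy n). rewrite cexpi_quot in Hxy.
    specialize (Hx n). specialize (Hy n). pose proof PI2_1.
    pose proof (cexpi_dist_one_ge (x n - y n) ltac:(lra)). rewrite Hxy in *.
    pose proof (cexpi_dist_one_le (g n)). lra.
Qed.

Lemma torus_to_cube_reduction :
  borel_reducible distC distR torusN (torus_rel (Gof S)) cube (cube_rel S).
Proof.
  exists torus_to_cube. split; [exact torus_to_cube_borel|].
  intros z w Hz Hw. unfold cube_rel, torus_rel, Gof.
  split.
  - intros [g [Hg Hzw]].
    assert (Hgg : S (interleave g g)) by (apply (ideal_interleave S HS); exact Hg).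
    apply (ideal_ext S _ (interleave (half_diff_fst z w) (half_diff_snd z w)) HS);
      [apply torus_to_cube_sub|].
    apply (ideal_dominated S HS _ _ _ 1 Hgg Hgg), interleave_dominated; [lra| |];
      intros n; destruct (half_diff_le_dist z w n);
      pose proof (dist_le_quot_dist_one _ _ (Hz n) (Hw n)) as Hd; rewrite Hzw in Hd;
      pose proof (cexpi_dist_one_le (g n)); lra.
  - intros Hzw.
    destruct (ideal_deinterleave S HS (half_diff_fst z w) (half_diff_snd z w)) as [Ha Hb].
    { apply (ideal_ext S _ _ HS (fun i => eq_sym (torus_to_cube_sub z w i)) Hzw). }
    set (u n := cmul (z n) (cinv (w n))).
    assert (Hu : forall n, unit_circle (u n))
      by (intros n; apply unit_circle_quot; [apply Hz|apply Hw]).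
    exists (fun n => arg (u n)). split.
    + apply (ideal_dominated S HS _ _ _ 64 Ha Hb). intros n.
      destruct (arg_spec (u n) (Hu n)) as [Hexp Hrange].
      pose proof (cexpi_dist_one_ge _ Hrange) as Harg. rewrite Hexp in Harg.
      pose proof (quot_dist_one_le_sum (z n) (w n) (Hw n)).
      unfold half_diff_fst, half_diff_snd. rewrite !Rabs_half. unfold u in *. lra.
    + intros n. symmetry. apply (arg_spec (u n) (Hu n)).
Qed.

End Reductions.
Theorem interleaving_ideal_bireducible S : interleaving_ideal S ->
  borel_bireducible distR distC cube (cube_rel S) torusN (torus_rel (Gof S)).
Proof.
  intros HS. split; [apply cube_to_torus_reduction|apply torus_to_cube_reduction]; exact HS.
Qed.

Theorem mainTheorem3 :
  borel_bireducible distR distC cube (cube_rel c0) torusN (torus_rel (Gof c0))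
  /\
  (forall p : R, 1 <= p ->
    borel_bireducible distR distC cube (cube_rel (lp p))
      torusN (torus_rel (Gof (lp p)))).
Proof.
  split.
  - apply interleaving_ideal_bireducible, interleaving_ideal_c0.
  - intros p Hp. apply interleaving_ideal_bireducible, interleaving_ideal_lp. lra.
Qed.
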